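(* The compact objects of $p\mathsf{Vec}_\mathbb{Q}$ are exactly the tame persistence modules of finite type.
   Context: $p\mathsf{Vec}_\mathbb{Q}$ is the category of functors from the poset $[0,\infty)$ to $\mathbb{Q}$-vector spaces (persistence modules). An object $X$ is compact if $\mathrm{Hom}(X,-)$ preserves filtered colimits. A persistence module $\mathbb{V}$ is of finite type if each $\mathbb{V}(t)$ is finite-dimensional. A finite sequence $t_0<\dots<t_n$ in $[0,\infty)$ discretizes $\mathbb{V}$ if $\mathbb{V}(s\le t)$ can fail to be an isomorphism only when $s<t_i\le t$ for some $i$; $\mathbb{V}$ is tame if it admits a discretization. *)

From HB Require Import structures.
From mathcomp Require Import all_boot all_order all_algebra.
From Stdlib Require Import Rdefinitions Raxioms Sorted.
Set Implicit Arguments. Unset Strict Implicit. Unset Printing Implicit Defensive.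
Import GRing.Theory.
Local Open Scope ring_scope.

Definition nnR := {x : R | Rle R0 x}.
Definition nnle (s t : nnR) : Prop := Rle (proj1_sig s) (proj1_sig t).

Record pmod := PMod {
  pobj :> nnR -> lmodType rat;
  pmap : forall s t : nnR, nnle s t -> pobj s -> pobj t;
  pmap_linear : forall s t (h : nnle s t), linear (pmap h);
  pmap_id : forall t (h : nnle t t) v, pmap h v = v;
  pmap_comp : forall s t u (hst : nnle s t) (htu : nnle t u) (hsu : nnle s u) v,
      pmap hsu v = pmap htu (pmap hst v) }.

Record pmor (V W : pmod) := PMor {
  mcomp :> forall t, V t -> W t;
  mcomp_linear : forall t, linear (@mcomp t);
  mcomp_nat : forall s t (h : nnle s t) v,
      @mcomp t (pmap h v) = pmap h (@mcomp s v) }.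
Arguments mcomp {V W} p t _ : rename.

Lemma linear_comp_aux (U V W : lmodType rat) (f : V -> W) (g : U -> V) :
  linear f -> linear g -> linear (fun x => f (g x)).
Proof. by move=> hf hg a u v /=; rewrite hg hf. Qed.

Lemma pcomp_nat (U V W : pmod) (f : pmor V W) (g : pmor U V) s t (h : nnle s t) v :
  f t (g t (pmap h v)) = pmap h (f s (g s v)).
Proof. by rewrite !mcomp_nat. Qed.

Definition pcomp (U V W : pmod) (f : pmor V W) (g : pmor U V) : pmor U W :=
  @PMor U W (fun t x => f t (g t x))
    (fun t => linear_comp_aux (@mcomp_linear _ _ f t) (@mcomp_linear _ _ g t))
    (pcomp_nat f g).

Record cat := Cat {
  ob : Type;
  hom : ob -> ob -> Type;
  cid : forall i, hom i i;
  ccomp : forall i j k, hom j k -> hom i j -> hom i k;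
  ccomp_id_l : forall i j (u : hom i j), ccomp (cid j) u = u;
  ccomp_id_r : forall i j (u : hom i j), ccomp u (cid i) = u;
  ccomp_assoc : forall i j k l (u : hom i j) (v : hom j k) (w : hom k l),
      ccomp w (ccomp v u) = ccomp (ccomp w v) u }.

Definition filtered (C : cat) : Prop :=
  inhabited (ob C) /\
  (forall i j : ob C, exists k (u : hom i k) (v : hom j k), True) /\
  (forall (i j : ob C) (u v : hom i j),
      exists k (w : hom j k), ccomp w u = ccomp w v).

Record diagram (C : cat) := Diagram {
  dob : ob C -> pmod;
  dmap : forall i j, hom i j -> pmor (dob i) (dob j);
  dmap_id : forall i t x, dmap (cid i) t x = x;
  dmap_comp : forall i j k (u : hom i j) (w : hom j k) t x,
      dmap (ccomp w u) t x = dmap w t (dmap u t x) }.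

Definition is_cocone (C : cat) (D : diagram C) (L : pmod)
    (iota : forall i, pmor (dob D i) L) : Prop :=
  forall i j (u : hom i j) t x, iota j t (dmap D u t x) = iota i t x.

Definition is_colimit (C : cat) (D : diagram C) (L : pmod)
    (iota : forall i, pmor (dob D i) L) : Prop :=
  @is_cocone C D L iota /\
  forall (M : pmod) (kappa : forall i, pmor (dob D i) M), @is_cocone C D M kappa ->
    exists m : pmor L M,
      (forall i t x, m t (iota i t x) = kappa i t x) /\
      (forall m' : pmor L M, (forall i t x, m' t (iota i t x) = kappa i t x) ->
         forall t y, m' t y = m t y).

(** Colimits in Set (Type) of the diagram i |-> Hom(X, D i), with cocone
    g |-> iota_i o g into Hom(X, L). *)
Definition hom_cocone_is_colimit (X : pmod) (C : cat) (D : diagram C) (L : pmod)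
    (iota : forall i, pmor (dob D i) L) : Prop :=
  (forall i j (u : hom i j) (g : pmor X (dob D i)),
      pcomp (iota j) (pcomp (dmap D u) g) = pcomp (iota i) g) /\
  forall (Z : Type) (c : forall i, pmor X (dob D i) -> Z),
    (forall i j (u : hom i j) (g : pmor X (dob D i)), c j (pcomp (dmap D u) g) = c i g) ->
    exists h : pmor X L -> Z,
      (forall i (g : pmor X (dob D i)), h (pcomp (iota i) g) = c i g) /\
      (forall h' : pmor X L -> Z,
         (forall i (g : pmor X (dob D i)), h' (pcomp (iota i) g) = c i g) ->
         forall f, h' f = h f).

Definition compact (X : pmod) : Prop :=
  forall (C : cat) (D : diagram C), filtered C ->
  forall (L : pmod) (iota : forall i, pmor (dob D i) L),
    @is_colimit C D L iota -> @hom_cocone_is_colimit X C D L iota.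

Definition findim (V : lmodType rat) : Prop :=
  exists s : seq V, forall v : V,
    exists c : 'I_(size s) -> rat, v = (\sum_(i < size s) c i *: s`_i)%R.

Definition finite_type (V : pmod) : Prop := forall t, findim (V t).

Definition discretizes (ts : list R) (V : pmod) : Prop :=
  ts <> nil /\ List.Forall (fun x => Rle R0 x) ts /\ Sorted Rlt ts /\
  forall (s t : nnR) (h : nnle s t), ~ bijective (@pmap V s t h) ->
    exists ti, List.In ti ts /\ Rlt (proj1_sig s) ti /\ Rle ti (proj1_sig t).

Definition tame (V : pmod) : Prop := exists ts : list R, discretizes ts V.

(* A persistence module X is the filtered colimit of its submodules generated
   by finitely many elements, and also of the modules obtained from X by
   freezing it on an interval.  If X is compact, id_X factors through a stage
   of such a diagram.  This makes every X(t) finite-dimensional, and makes X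
   constant on [p - e, p) and on [p, p + e) around every point p, as well as
   on [N, oo); a supremum argument then produces a finite discretization.
   Conversely, a tame module of finite type is determined by the
   finite-dimensional spaces X(p) at the points p of a discretization and the
   maps between them.  Filtered colimits of persistence modules are computed
   pointwise by germs, so a morphism from X into one amounts to finitely many
   vectors subject to finitely many equations, all of which lift to, and hold
   at, a single stage. *)

From HB Require Import structures.
From mathcomp Require Import all_boot all_algebra.
From mathcomp Require Import boolp.
From Stdlib Require Import Reals Lra Sorted ClassicalEpsilon ProofIrrelevance.
From Stdlib Require List.

Set Implicit Arguments. Unset Strict Implicit. Unset Printing Implicit Defensive.
Import GRing.Theory GRing.LinearExports.
Local Open Scope ring_scope.

(** * Persistence modules and filtered categories *)

Section LinearFacts.
Variables (U V : lmodType rat) (f : U -> V).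
Hypothesis f_lin : linear f.

Lemma lin_add x y : f (x + y) = f x + f y.
Proof. exact: (GRing.semilinear_linear f_lin).2. Qed.

Lemma lin_scale a x : f (a *: x) = a *: f x.
Proof. exact: (GRing.semilinear_linear f_lin).1. Qed.

Lemma lin0 : f 0 = 0.
Proof. by rewrite -(scale0r 0) lin_scale scale0r. Qed.

Lemma lin_sum n (F : 'I_n -> U) : f (\sum_(i < n) F i) = \sum_(i < n) f (F i).
Proof.
elim: n F => [|n IH] F; first by rewrite !big_ord0 lin0.
by rewrite !big_ord_recr /= lin_add IH.
Qed.

End LinearFacts.

Lemma sval_inj (A : Type) (P : A -> Prop) (x y : {a | P a}) :
  sval x = sval y -> x = y.
Proof. by case: x y => x hx [y hy] /= E; subst y; rewrite (proof_irrelevance _ hx hy). Qed.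

Lemma bij_compl (A B C : Type) (f : A -> B) (g : B -> C) :
  bijective (g \o f) -> bijective f -> bijective g.
Proof.
case=> h gh hg [f' ff' f'f]; exists (f \o h) => y /=.
  by rewrite -{1}(f'f y) /=; have := gh (f' y) => /= ->.
exact: hg.
Qed.

Lemma nnle_refl (s : nnR) : nnle s s.
Proof. rewrite /nnle; lra. Qed.

Lemma nnle_trans (s t u : nnR) : nnle s t -> nnle t u -> nnle s u.
Proof. rewrite /nnle; lra. Qed.

Section PersistenceMaps.
Variable X : pmod.

Lemma pmap_irr (s t : nnR) (h h' : nnle s t) (v : X s) : pmap h v = pmap h' v.
Proof. by rewrite (proof_irrelevance _ h h'). Qed.

Lemma pmap_pmap (s t u : nnR) (hst : nnle s t) (htu : nnle t u) (v : X s) :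
  pmap htu (pmap hst v) = pmap (nnle_trans hst htu) v.
Proof. by rewrite (pmap_comp hst htu (nnle_trans hst htu)). Qed.

Lemma pmap_square (s t1 t2 u : nnR) (h1 : nnle s t1) (h2 : nnle t1 u)
    (h3 : nnle s t2) (h4 : nnle t2 u) (v : X s) :
  pmap h2 (pmap h1 v) = pmap h4 (pmap h3 v).
Proof. by rewrite !pmap_pmap; apply: pmap_irr. Qed.

Lemma pmap_bij_r (s t u : nnR) (hst : nnle s t) (htu : nnle t u) (hsu : nnle s u) :
  bijective (pmap hsu : X s -> X u) -> bijective (pmap hst : X s -> X t) ->
  bijective (pmap htu : X t -> X u).
Proof.
move=> b1 b2; apply: (@bij_compl _ _ _ (pmap hst)) => //.
exact: (eq_bij b1 (fun v => pmap_comp hst htu hsu v)).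
Qed.

Lemma pmap_bij_comp (s t u : nnR) (hst : nnle s t) (htu : nnle t u) (hsu : nnle s u) :
  bijective (pmap hst : X s -> X t) -> bijective (pmap htu : X t -> X u) ->
  bijective (pmap hsu : X s -> X u).
Proof.
move=> b1 b2; apply: (eq_bij (bij_comp b2 b1)) => v.
exact: esym (pmap_comp hst htu hsu v).
Qed.

Lemma pmap_bij_irr (s t : nnR) (h h' : nnle s t) :
  bijective (pmap h : X s -> X t) -> bijective (pmap h' : X s -> X t).
Proof. by rewrite (proof_irrelevance _ h h'). Qed.

End PersistenceMaps.

Lemma pmor_ext (V W : pmod) (f g : pmor V W) : (forall t x, f t x = g t x) -> f = g.
Proof.
case: f g => f fl fn [g gl gn] /= H.
have E : f = g.
  by apply: functional_extensionality_dep => t; apply: functional_extensionality_dep.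
by subst g; rewrite (proof_irrelevance _ fl gl) (proof_irrelevance _ fn gn).
Qed.

Definition pmor_id (X : pmod) : pmor X X :=
  @PMor X X (fun t x => x) (fun t a x y => erefl) (fun s t h v => erefl).

Section PmorLinear.
Variables (V W : pmod) (f : pmor V W) (t : nnR).

Lemma pmorD x y : f t (x + y) = f t x + f t y.
Proof. exact: lin_add (@mcomp_linear V W f t) x y. Qed.

Lemma pmorZ a x : f t (a *: x) = a *: f t x.
Proof. exact: lin_scale (@mcomp_linear V W f t) a x. Qed.

Lemma pmor0 : f t 0 = 0.
Proof. exact: lin0 (@mcomp_linear V W f t). Qed.

End PmorLinear.

Section PosetCat.
Variables (I : Type) (le : I -> I -> Prop).
Hypotheses (le_refl : forall i, le i i) (le_trans : forall i j k, le i j -> le j k -> le i k).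

Definition poset_cat : cat.
Proof.
refine (@Cat I le le_refl (fun i j k (v : le j k) (u : le i j) => le_trans u v) _ _ _);
  by move=> *; apply: proof_irrelevance.
Defined.

Lemma poset_cat_filtered :
  inhabited I -> (forall i j, exists k, le i k /\ le j k) -> filtered poset_cat.
Proof.
move=> inh dir; split => //; split.
  by move=> i j; have [k [u v]] := dir i j; exists k, u, v.
by move=> i j u v; exists j, (le_refl j); apply: (proof_irrelevance (le i j)).
Qed.

End PosetCat.

Section Filtered.
Variable C : cat.
Hypothesis fC : filtered C.

Lemma filtered_bound (i j : ob C) : exists k (u : hom i k) (v : hom j k), True.
Proof. by case: fC => _ [H _]; apply: H. Qed.

Lemma filtered_coeq (i j : ob C) (u v : hom i j) : exists k (w : hom j k), ccomp w u = ccomp w v.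
Proof. by case: fC => _ [_ H]; apply: H. Qed.

Lemma filtered_square (i k k' : ob C) (u : hom i k) (u' : hom i k') :
  exists k'' (w : hom k k'') (w' : hom k' k''), ccomp w u = ccomp w' u'.
Proof.
have [k1 [a [b _]]] := filtered_bound k k'.
have [k2 [c Ec]] := filtered_coeq (ccomp a u) (ccomp b u').
by exists k2, (ccomp c a), (ccomp c b); rewrite -!ccomp_assoc.
Qed.

Lemma filtered_bound_list (A : Type) (Q : A -> ob C -> Prop) (l : list A) :
  (forall a i j (u : hom i j), Q a i -> Q a j) -> (forall a, List.In a l -> exists i, Q a i) ->
  exists i, forall a, List.In a l -> Q a i.
Proof.
move=> Q_up; elim: l => [|a l IH] H; first by case: fC => [[i0] _]; exists i0.
have [i Hi] := IH (fun b hb => H b (or_intror hb)).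
have [j Hj] := H a (or_introl erefl).
have [k [u [v _]]] := filtered_bound i j.
by exists k => b [<-|hb]; [apply: Q_up Hj|apply: Q_up (Hi b hb)].
Qed.

Lemma filtered_bound_list_under (A : Type) (i : ob C) (Q : A -> forall k, hom i k -> Prop)
    (l : list A) :
  (forall a k k' (u : hom i k) (w : hom k k'), Q a k u -> Q a k' (ccomp w u)) ->
  (forall a, List.In a l -> exists k (u : hom i k), Q a k u) ->
  exists k (u : hom i k), forall a, List.In a l -> Q a k u.
Proof.
move=> Q_up; elim: l => [|a l IH] H; first by exists i, (cid i).
have [k [u Hu]] := IH (fun b hb => H b (or_intror hb)).
have [k' [u' Hu']] := H a (or_introl erefl).
have [k'' [w [w' E]]] := filtered_square u u'.
exists k'', (ccomp w u) => b [<-|hb]; last exact: Q_up (Hu b hb).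
by rewrite E; apply: Q_up Hu'.
Qed.

End Filtered.

(* The constant cocone [True] into [Prop] extends along [iota] both to
   [fun _ => True] and to "factors through a stage"; by uniqueness of the
   extension these agree. *)
Lemma compact_factor (X : pmod) (C : cat) (D : diagram C) (L : pmod)
    (iota : forall i, pmor (dob D i) L) :
  compact X -> filtered C -> is_colimit iota ->
  forall f : pmor X L, exists i (g : pmor X (dob D i)), forall t x, iota i t (g t x) = f t x.
Proof.
move=> cX fC cL f; have [_ H] := cX C D fC L iota cL.
pose factors (f : pmor X L) := exists i g, f = pcomp (iota i) g.
have [h [_ hu]] := H Prop (fun _ _ => True) (fun _ _ _ _ => erefl).
have E1 := hu factors (fun i g => propT (ex_intro _ i (ex_intro _ g erefl))).
have E2 := hu (fun _ => True) (fun _ _ => erefl).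
have : factors f by rewrite E1 -E2.
by case=> i [g ->]; exists i, g.
Qed.

(** * Compact modules are tame *)

(* [trunc i] collapses the region {s >= a_i | B_i s} onto a_i.  When these
   regions shrink along a directed order and every point lies outside one of
   them, the modules [X o trunc i] have colimit X; so for a compact X, id_X
   factors through one of them and X is constant on the collapsed region. *)
Section Truncation.
Variables (X : pmod) (I : Type) (a : I -> nnR) (B : I -> R -> Prop).
Hypothesis B_down : forall i s t, B i t -> (s <= t)%R -> B i s.

Definition trunc_le (i j : I) := nnle (a i) (a j) /\ forall s, B j s -> B i s.

Lemma trunc_le_refl i : trunc_le i i.
Proof. by split=> //; apply: nnle_refl. Qed.

Lemma trunc_le_trans i j k : trunc_le i j -> trunc_le j k -> trunc_le i k.
Proof. by move=> [h1 h2] [h3 h4]; split; [apply: nnle_trans h1 h3|auto]. Qed.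

Definition collapsed (i : I) (s : nnR) := nnle (a i) s /\ B i (sval s).

Definition trunc (i : I) (s : nnR) : nnR :=
  if excluded_middle_informative (collapsed i s) then a i else s.

Lemma trunc_le_id i s : nnle (trunc i s) s.
Proof.
rewrite /trunc; destruct (excluded_middle_informative (collapsed i s)) as [[]|] => //.
exact: nnle_refl.
Qed.

Lemma trunc_mono i s t : nnle s t -> nnle (trunc i s) (trunc i t).
Proof.
rewrite /trunc => hst.
destruct (excluded_middle_informative (collapsed i s)) as [[h1 h2]|h1];
  destruct (excluded_middle_informative (collapsed i t)) as [[h3 h4]|h3];
  rewrite /= /collapsed /nnle in hst h1 h3 *; try lra.
case: (Rle_dec (sval (a i)) (sval s)) => h5; last lra.
by exfalso; apply: h1; split => //; apply: B_down h4 hst.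
Qed.

Lemma trunc_monoi i j : trunc_le i j -> forall s, nnle (trunc i s) (trunc j s).
Proof.
move=> [hij hB] s; rewrite /trunc.
destruct (excluded_middle_informative (collapsed i s)) as [[h1 h2]|h1];
  destruct (excluded_middle_informative (collapsed j s)) as [[h3 h4]|h3];
  rewrite /= /collapsed /nnle in hij h1 h3 *; try lra.
by exfalso; apply: h1; split; [rewrite /nnle; lra|apply: hB].
Qed.

Lemma trunc_collapsed i s : collapsed i s -> nnle (trunc i s) (a i).
Proof.
move=> hc; rewrite /trunc.
by destruct (excluded_middle_informative (collapsed i s)) as [hc'|n] => /=;
  [apply: nnle_refl|case: n].
Qed.

Lemma trunc_ge i s : (collapsed i s -> nnle s (a i)) -> nnle s (trunc i s).
Proof.
rewrite /trunc => H.
by destruct (excluded_middle_informative (collapsed i s)) as [h|h] => /=;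
  [apply: H|apply: nnle_refl].
Qed.

Definition truncated (i : I) : pmod :=
  @PMod (fun t => X (trunc i t)) (fun s t h => pmap (trunc_mono i h))
    (fun s t h => @pmap_linear X _ _ _) (fun t h v => @pmap_id X _ _ v)
    (fun s t u hst htu hsu v => @pmap_comp X _ _ _ _ _ _ v).

Definition trunc_map (i j : I) (u : trunc_le i j) : pmor (truncated i) (truncated j) :=
  @PMor (truncated i) (truncated j) (fun t => pmap (trunc_monoi u t))
    (fun t => @pmap_linear X _ _ _) (fun s t h v => @pmap_square X _ _ _ _ _ _ _ _ v).

Definition trunc_cat := poset_cat trunc_le_refl trunc_le_trans.

Definition trunc_diagram : diagram trunc_cat :=
  @Diagram trunc_cat truncated trunc_map (fun i t x => @pmap_id X _ _ x)
    (fun i j k u w t x => @pmap_comp X _ _ _ _ _ _ x).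

Definition trunc_incl (i : I) : pmor (truncated i) X :=
  @PMor (truncated i) X (fun t => pmap (trunc_le_id i t))
    (fun t => @pmap_linear X _ _ _) (fun s t h v => @pmap_square X _ _ _ _ _ _ _ _ v).

Hypothesis I_inhabited : inhabited I.
Hypothesis trunc_directed : forall i j, exists k, trunc_le i k /\ trunc_le j k.
Hypothesis trunc_exhaustive : forall s, exists i, nnle s (trunc i s).

Lemma trunc_colimit : @is_colimit trunc_cat trunc_diagram X trunc_incl.
Proof.
split=> [i j u t x /=|M kap kap_cocone]; first by rewrite pmap_pmap; apply: pmap_irr.
have kapE i j t (w : nnR) (z : X w) (h1 : nnle w (trunc i t)) (h2 : nnle w (trunc j t)) :
    kap i t (pmap h1 z) = kap j t (pmap h2 z).
  have [k [u v]] := trunc_directed i j.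
  rewrite -(kap_cocone i k u t) -(kap_cocone j k v t) /= !pmap_pmap.
  by rewrite (@pmap_irr X _ _ (nnle_trans h1 _) (nnle_trans h2 (trunc_monoi v t))).
pose ex_i t := constructive_indefinite_description _ (trunc_exhaustive t).
pose m0 t (x : X t) := kap (sval (ex_i t)) t (pmap (svalP (ex_i t)) x).
have m0_lin t : linear (m0 t) by move=> c x y; rewrite /m0 pmap_linear mcomp_linear.
have m0_nat s t (h : nnle s t) v : m0 t (pmap h v) = pmap h (m0 s v).
  by rewrite /m0 -mcomp_nat /= !pmap_pmap; apply: kapE.
exists (PMor m0_lin m0_nat); split=> [i t x /=|m' hm' t y /=].
  by rewrite /m0 pmap_pmap (kapE _ i t _ x _ (nnle_refl _)) pmap_id.
by rewrite /m0 -hm' /= pmap_pmap pmap_id.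
Qed.

Lemma compact_const_on_collapsed : compact X ->
  exists i, forall s (h : nnle (a i) s), B i (sval s) -> bijective (pmap h : X _ -> X s).
Proof.
move=> cX.
have fC : filtered trunc_cat by apply: poset_cat_filtered.
have [i [g hg]] := compact_factor cX fC trunc_colimit (pmor_id X).
exists i => s h hB.
have hs := trunc_collapsed (conj h hB).
exists (fun y => pmap hs (g s y)) => [x|y].
  by rewrite (mcomp_nat g h x) /= pmap_pmap (pmap_irr _ (trunc_le_id i (a i))); apply: hg.
by rewrite pmap_pmap (pmap_irr _ (trunc_le_id i s)); apply: hg.
Qed.

End Truncation.

Local Open Scope R_scope.

Definition mknn (x : R) (h : 0 <= x) : nnR := exist _ x h.

Definition const_on (X : pmod) (c m : R) : Prop :=
  forall (s t : nnR) (h : nnle s t), c <= sval s -> sval t < m -> bijective (@pmap X _ _ h).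

Section LocallyConstant.
Variable X : pmod.
Hypothesis cX : compact X.

Let posR := {e : R | 0 < e}.

Lemma posR_directed (P : posR -> posR -> Prop) :
  (forall e1 e2 : posR, sval e2 <= sval e1 -> P e1 e2) ->
  forall e1 e2, exists e, P e1 e /\ P e2 e.
Proof.
move=> HP [e1 h1] [e2 h2]; exists (exist _ _ (Rmin_glb_lt _ _ _ h1 h2)).
by split; apply: HP; [apply: Rmin_l|apply: Rmin_r].
Qed.

Lemma compact_const_right (p : nnR) : exists e, 0 < e /\ const_on X (sval p) (sval p + e).
Proof.
pose B (e : posR) x := x < sval p + sval e.
have B_down : forall e s t, B e t -> s <= t -> B e s by rewrite /B => *; lra.
have inh : inhabited posR by constructor; exists 1; lra.
have dir : forall e1 e2, exists e, trunc_le (fun=> p) B e1 e /\ trunc_le (fun=> p) B e2 e.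
  apply: posR_directed => e1 e2 le21; split; first exact: nnle_refl.
  by rewrite /B => x; lra.
have exh : forall s, exists e, nnle s (trunc (fun=> p) B e s).
  move=> s; case: (Rle_dec (sval s) (sval p)) => hs.
    by exists (exist _ 1 Rlt_0_1); apply: trunc_ge.
  have he : 0 < sval s - sval p by lra.
  by exists (exist _ _ he); apply: trunc_ge => -[_]; rewrite /B /=; lra.
have [[e he] He] := compact_const_on_collapsed B_down inh dir exh cX.
exists e; split => // s t h hps hte.
have hpt : nnle p t by rewrite /nnle in h *; lra.
by apply: (@pmap_bij_r X _ _ _ hps h hpt); apply: He; rewrite /B /=; rewrite /nnle in h; lra.
Qed.

Lemma compact_const_left (p : nnR) : exists e, 0 < e /\ const_on X (sval p - e) (sval p).
Proof.
pose a (e : posR) := mknn (Rmax_l 0 (sval p - sval e)).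
pose B (e : posR) x := x < sval p.
have B_down : forall e s t, B e t -> s <= t -> B e s by rewrite /B => *; lra.
have inh : inhabited posR by constructor; exists 1; lra.
have dir : forall e1 e2, exists e, trunc_le a B e1 e /\ trunc_le a B e2 e.
  apply: posR_directed => e1 e2 le21; split => //.
  by rewrite /nnle /=; apply: Rle_max_compat_l; lra.
have exh : forall s, exists e, nnle s (trunc a B e s).
  move=> s; case: (Rle_dec (sval p) (sval s)) => hs.
    by exists (exist _ 1 Rlt_0_1); apply: trunc_ge => -[_]; rewrite /B /=; lra.
  have he : 0 < sval p - sval s by lra.
  exists (exist _ _ he); apply: trunc_ge => _; rewrite /nnle /=.
  by apply: Rle_trans (Rmax_r _ _); lra.
have [[e he] He] := compact_const_on_collapsed B_down inh dir exh cX.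
exists e; split => // s t h hps hte.
have has : nnle (a (exist _ e he)) s.
  by rewrite /nnle /=; apply: Rmax_lub; [apply: (svalP s)|lra].
have hat : nnle (a (exist _ e he)) t by apply: nnle_trans has h.
by apply: (@pmap_bij_r X _ _ _ has h hat); apply: He; rewrite /B /=; rewrite /nnle in h; lra.
Qed.

Lemma compact_const_eventually : exists N : nnR,
  forall (s t : nnR) (h : nnle s t), sval N <= sval s -> bijective (@pmap X _ _ h).
Proof.
have inh : inhabited nnR by constructor; exists 0; lra.
have dir : forall i j : nnR, exists k, trunc_le (@id nnR) (fun _ _ => True) i k /\
    trunc_le (@id nnR) (fun _ _ => True) j k.
  move=> i j; exists (mknn (Rle_trans _ _ _ (svalP i) (Rmax_l (sval i) (sval j)))).
  by rewrite /trunc_le /nnle /=; split; split => //; [apply: Rmax_l|apply: Rmax_r].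
have exh : forall s, exists i, nnle s (trunc (@id nnR) (fun _ _ => True) i s).
  by move=> s; exists s; apply: trunc_ge => _; apply: nnle_refl.
have [N HN] := compact_const_on_collapsed (fun _ _ _ _ _ => I) inh dir exh cX.
exists N => s t h hs.
have hNt : nnle N t by apply: nnle_trans h.
by apply: (@pmap_bij_r X _ _ _ hs h hNt); apply: HN.
Qed.

End LocallyConstant.

Lemma sorted_rcons (l : list R) x : Sorted Rlt l -> List.Forall (fun y => y < x) l ->
  Sorted Rlt (l ++ x :: nil).
Proof.
elim: l => [|y l IH] /= hs hf; first by constructor.
have [hs1 hd] := Sorted_inv hs.
constructor; first exact: IH hs1 (List.Forall_inv_tail hf).
move: hd; case: l {IH hs hs1 hf} (List.Forall_inv hf) => [|z l] /= hyx hd; constructor => //.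
exact: HdRel_inv hd.
Qed.

Section Tameness.
Variable X : pmod.

Definition disc_below (u : R) : Prop := exists ts : list R,
  Sorted Rlt ts /\ List.Forall (fun x => 0 <= x < u) ts /\
  forall (s t : nnR) (h : nnle s t), sval t < u -> ~ bijective (@pmap X _ _ h) ->
    exists ti, List.In ti ts /\ sval s < ti <= sval t.

Lemma disc_below0 : disc_below 0.
Proof.
exists nil; split; first constructor; split; first constructor.
by move=> s t h ht; have := svalP t; lra.
Qed.

Lemma disc_below_extend (c b m u : R) : c < b <= m -> 0 <= m < u ->
  const_on X c m -> const_on X m u -> disc_below b -> disc_below u.
Proof.
move=> hcbm hmu cst_l cst_r [ts [srt [ts_range disc]]].
exists (ts ++ m :: nil); split; [|split].
- by apply: sorted_rcons srt _; apply: List.Forall_impl ts_range => x /=; lra.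
- apply/List.Forall_app; split; first by apply: List.Forall_impl ts_range => x /=; lra.
  by constructor; [lra|constructor].
have in_ts ti : List.In ti ts -> List.In ti (ts ++ m :: nil).
  by move=> hi; apply/List.in_or_app; left.
have at_m (s t : nnR) : sval s < m <= sval t ->
    exists ti, List.In ti (ts ++ m :: nil) /\ sval s < ti <= sval t.
  by move=> hm; exists m; split => //; apply/List.in_or_app; right; left.
move=> s t h htu nbij; have hst : sval s <= sval t := h.
case: (Rlt_le_dec (sval t) b) => htb.
  by have [ti [hi hti]] := disc s t h htb nbij; exists ti; split => //; apply: in_ts.
case: (Rlt_le_dec (sval s) c) => hsc; last first.
  case: (Rlt_le_dec (sval t) m) => htm; first by case: nbij; apply: cst_l.
  case: (Rlt_le_dec (sval s) m) => hsm; first by apply: at_m; lra.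
  by case: nbij; apply: cst_r.
have c0 : 0 <= c by have := svalP s; lra.
have hsc' : nnle s (mknn c0) by rewrite /nnle /=; lra.
have hct : nnle (mknn c0) t by rewrite /nnle /=; lra.
case: (classic (bijective (@pmap X _ _ hsc'))) => [bsc|nbsc].
  case: (Rlt_le_dec (sval t) m) => htm; last by apply: at_m; lra.
  by case: nbij; apply: (@pmap_bij_comp X _ _ _ hsc' hct h bsc); apply: cst_l => /=; lra.
have [ti [hi hti]] := disc s (mknn c0) hsc' ltac:(rewrite /=; lra) nbsc.
by exists ti; split; [apply: in_ts|rewrite /= in hti; lra].
Qed.

(* At the supremum, X is constant just to the left and just to the right, so a
   discretization below [sup - e/2] extends to one below [sup + e/2]. *)
Lemma compact_disc_below_unbounded : compact X -> ~ bound disc_below.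
Proof.
move=> cX hb; have [sup [sup_ub sup_lub]] := @completeness disc_below hb (ex_intro _ 0 disc_below0).
have sup0 : 0 <= sup by apply: (sup_ub); apply: disc_below0.
have [el [hel cst_l]] := compact_const_left cX (mknn sup0).
have [er [her cst_r]] := compact_const_right cX (mknn sup0).
pose e := Rmin el er.
have he : 0 < e by apply: Rmin_glb_lt.
have [b [hb_disc hb_sup]] : exists b, disc_below b /\ sup - e / 2 < b.
  apply: NNPP => hn; suff : sup <= sup - e / 2 by lra.
  by apply: sup_lub => x Ax; apply: Rnot_lt_le => hx; apply: hn; exists x.
have : sup + e / 2 <= sup; last lra.
apply: (sup_ub); apply: (@disc_below_extend (sup - e / 2) b sup) => //.
- by split; [lra|apply: (sup_ub)].
- lra.
- move=> s t h hs ht; apply: cst_l => /=; last lra.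
  by have := Rmin_l el er; rewrite -/e; lra.
- move=> s t h hs ht; apply: cst_r => //=.
  by have := Rmin_r el er; rewrite -/e; lra.
Qed.

Lemma compact_tame : compact X -> tame X.
Proof.
move=> cX; have [N const_N] := compact_const_eventually cX.
have [u [[ts [srt [ts_range disc]]] hNu]] : exists u, disc_below u /\ sval N < u.
  apply: NNPP => hn; apply: (compact_disc_below_unbounded cX); exists (sval N) => x Ax.
  by apply: Rnot_lt_le => hx; apply: hn; exists x.
have u0 : 0 <= u by have := svalP N; lra.
have in_ts' x : List.In x ts -> List.In x (ts ++ u :: nil) by move=> hx; apply/List.in_or_app; left.
exists (ts ++ u :: nil); split; [by case: ts {srt ts_range disc in_ts'}|split; [|split]].
- apply/List.Forall_app; split; last by constructor; [lra|constructor].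
  by apply: List.Forall_impl ts_range => x /=; lra.
- by apply: sorted_rcons srt _; apply: List.Forall_impl ts_range => x /=; lra.
move=> s t h nbij.
case: (Rlt_le_dec (sval t) u) => htu.
  by have [ti [hi hti]] := disc s t h htu nbij; exists ti; split => //; apply: in_ts'.
case: (Rle_lt_dec (sval N) (sval s)) => hsN; first by case: nbij; apply: const_N.
have hsN' : nnle s N by rewrite /nnle; lra.
have hNt : nnle N t by rewrite /nnle; lra.
have nbsN : ~ bijective (@pmap X _ _ hsN').
  by move=> b; apply: nbij; apply: (@pmap_bij_comp X _ _ _ hsN' hNt h b); apply: const_N; lra.
have [ti [hi hti]] := disc s N hsN' hNu nbsN.
by exists ti; split; [apply: in_ts'|have := svalP N; lra].
Qed.

End Tameness.

Local Open Scope ring_scope.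

(** * Compact modules are of finite type *)

Record lmodOps (T : Type) := LmodOps {
  ops_zero : T; ops_add : T -> T -> T; ops_opp : T -> T; ops_scale : rat -> T -> T;
  ops_addA : associative ops_add; ops_addC : commutative ops_add;
  ops_add0 : left_id ops_zero ops_add; ops_addN : left_inverse ops_zero ops_opp ops_add;
  ops_scaleA : forall a b v, ops_scale a (ops_scale b v) = ops_scale (a * b) v;
  ops_scale1 : left_id 1 ops_scale;
  ops_scaleDr : right_distributive ops_scale ops_add;
  ops_scaleDl : forall v, {morph ops_scale^~ v : a b / a + b >-> ops_add a b} }.

Definition lmod_carrier (T : Type) (o : lmodOps T) : Type := T.
HB.instance Definition _ T o := gen_eqMixin (@lmod_carrier T o).
HB.instance Definition _ T o := gen_choiceMixin (@lmod_carrier T o).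
HB.instance Definition _ T o := GRing.isZmodule.Build (@lmod_carrier T o)
  (@ops_addA T o) (@ops_addC T o) (@ops_add0 T o) (@ops_addN T o).
HB.instance Definition _ T o := GRing.Zmodule_isLmodule.Build rat (@lmod_carrier T o)
  (@ops_scaleA T o) (@ops_scale1 T o) (@ops_scaleDr T o) (@ops_scaleDl T o).
Definition lmod_of (T : Type) (o : lmodOps T) : lmodType rat := @lmod_carrier T o.

Inductive in_span (V : lmodType rat) (G : V -> Prop) : V -> Prop :=
| span0 : in_span G 0
| span_gen x : G x -> in_span G x
| spanD x y : in_span G x -> in_span G y -> in_span G (x + y)
| spanZ a x : in_span G x -> in_span G (a *: x).

Lemma in_span_lin (U V : lmodType rat) (G : U -> Prop) (G' : V -> Prop) (f : U -> V) :
  linear f -> (forall x, G x -> G' (f x)) -> forall y, in_span G y -> in_span G' (f y).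
Proof.
move=> hf hG y; elim=> {y} [|x /hG|x y _ ihx _ ihy|a x _ ihx].
- by rewrite lin0 //; apply: span0.
- exact: span_gen.
- by rewrite lin_add //; apply: spanD.
- by rewrite lin_scale //; apply: spanZ.
Qed.

Lemma in_span_sub (V : lmodType rat) (G G' : V -> Prop) :
  (forall x, G x -> G' x) -> forall y, in_span G y -> in_span G' y.
Proof.
move=> hG y; elim=> {y} [|x /hG|x y _ ihx _ ihy|a x _ ihx].
- exact: span0.
- exact: span_gen.
- exact: spanD.
- exact: spanZ.
Qed.

Section Span.
Variables (V : lmodType rat) (G : V -> Prop).

Definition span_type := {x : V | in_span G x}.

Definition span_ops : lmodOps span_type.
Proof.
refine (@LmodOps span_type (exist _ 0 (span0 G))
  (fun x y => exist _ _ (spanD (svalP x) (svalP y)))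
  (fun x => exist _ _ (spanZ (-1) (svalP x)))
  (fun a x => exist _ _ (spanZ a (svalP x))) _ _ _ _ _ _ _ _);
  repeat move=> ?; apply: sval_inj => /=.
- exact: addrA.
- exact: addrC.
- exact: add0r.
- by rewrite scaleN1r addNr.
- exact: scalerA.
- exact: scale1r.
- exact: scalerDr.
- exact: scalerDl.
Defined.

Definition span_lmod : lmodType rat := lmod_of span_ops.

End Span.


Section FiniteType.
Variable X : pmod.

Definition gens := list {t : nnR & X t}.

Definition generated (l : gens) (s : nnR) (y : X s) : Prop :=
  exists t x (h : nnle t s), List.In (existT _ t x) l /\ y = pmap h x.

Lemma generated_pmap l s t (h : nnle s t) y : generated l y -> generated l (pmap h y).
Proof.
case=> r [x [h' [hi ->]]]; exists r, x, (nnle_trans h' h); split => //.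
exact: pmap_pmap.
Qed.

Lemma generated_sub l l' s y : List.incl l l' -> @generated l s y -> @generated l' s y.
Proof. by move=> u [r [x [h [hi ->]]]]; exists r, x, h; split => //; apply: u. Qed.

Definition fg_pmap l s t (h : nnle s t) (z : span_lmod (@generated l s)) :
    span_lmod (@generated l t) :=
  exist _ (pmap h (sval z)) (in_span_lin (pmap_linear h) (@generated_pmap l s t h) (svalP z)).

Definition fg_sub (l : gens) : pmod.
Proof.
refine (@PMod (fun s => span_lmod (@generated l s)) (@fg_pmap l) _ _ _).
- by move=> s t h c x y; apply: sval_inj; apply: (pmap_linear h c (sval x) (sval y)).
- by move=> t h v; apply: sval_inj; apply: pmap_id.
- by move=> s t u hst htu hsu v; apply: sval_inj; apply: pmap_comp.
Defined.

Definition fg_incl_map (l l' : gens) (u : List.incl l l') : pmor (fg_sub l) (fg_sub l').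
Proof.
refine (@PMor (fg_sub l) (fg_sub l') (fun s z => exist _ (sval z)
  (in_span_sub (fun y => @generated_sub l l' s y u) (svalP z))) _ _).
- by move=> t c x y; apply: sval_inj.
- by move=> s t h v; apply: sval_inj.
Defined.

Definition fg_cat := poset_cat (@List.incl_refl {t : nnR & X t}) (@List.incl_tran _).

Definition fg_diagram : diagram fg_cat.
Proof.
refine (@Diagram fg_cat fg_sub fg_incl_map _ _).
- by move=> i t x; apply: sval_inj.
- by move=> i j k u w t x; apply: sval_inj.
Defined.

Definition fg_incl (l : gens) : pmor (fg_sub l) X :=
  @PMor (fg_sub l) X (fun s z => sval z) (fun t c x y => erefl) (fun s t h v => erefl).

Lemma generated_self l s (y : X s) : List.In (existT _ s y) l -> @generated l s y.
Proof. by exists s, y, (nnle_refl s); rewrite pmap_id. Qed.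

Definition fg_elem (s : nnR) (y : X s) : fg_sub (existT _ s y :: nil) s :=
  exist _ y (span_gen (generated_self (List.in_eq _ _))).

Lemma fg_colimit : @is_colimit fg_cat fg_diagram X fg_incl.
Proof.
split=> // M kap kap_cocone.
have kapE l l' s (z : fg_sub l s) (z' : fg_sub l' s) : sval z = sval z' -> kap l s z = kap l' s z'.
  move=> E; have u : List.incl l (l ++ l') by apply: List.incl_appl; apply: List.incl_refl.
  have v : List.incl l' (l ++ l') by apply: List.incl_appr; apply: List.incl_refl.
  rewrite -(kap_cocone l (l ++ l') u s z) -(kap_cocone l' (l ++ l') v s z').
  by congr (kap _ s _); apply: sval_inj.
pose m0 s (y : X s) := kap _ s (fg_elem y).
have m0_lin s : linear (m0 s).
  move=> c x y; pose l : gens := existT _ s x :: existT _ s y :: nil.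
  pose zx : fg_sub l s := exist _ x (span_gen (generated_self (List.in_eq _ _))).
  pose zy : fg_sub l s :=
    exist _ y (span_gen (generated_self (List.in_cons _ _ _ (List.in_eq _ _)))).
  rewrite /m0 (kapE _ l s _ (c *: zx + zy)) // mcomp_linear.
  by rewrite (kapE _ _ s zx (fg_elem x)) // (kapE _ _ s zy (fg_elem y)).
have m0_nat s t (h : nnle s t) v : m0 t (pmap h v) = pmap h (m0 s v).
  by rewrite /m0 -mcomp_nat; apply: kapE.
exists (PMor m0_lin m0_nat); split=> [l t x|m' hm' t y] /=; last by rewrite /m0 -hm'.
by rewrite /m0; apply: kapE.
Qed.

Lemma span_generated_findim (l : gens) (t : nnR) : exists s : list (X t),
  forall v, in_span (@generated l t) v ->
    exists c : 'I_(size s) -> rat, v = \sum_(i < size s) c i *: s`_i.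
Proof.
pose f (e : {t : nnR & X t}) : X t :=
  if excluded_middle_informative (nnle (projT1 e) t) is left h then pmap h (projT2 e) else 0.
exists (map f l) => v; elim=> {v} [|x gx|x y _ [c1 ->] _ [c2 ->]|a x _ [c ->]].
- by exists (fun _ => 0); rewrite big1 // => i _; apply: scale0r.
- case: gx => r [x0 [h [hi ->]]].
  have [n [hn hnth]] := List.In_nth l (existT _ r x0) (existT _ r x0) hi.
  have hn' : (n < size (map f l))%nat by rewrite size_map; apply/ltP.
  exists (fun i => if nat_of_ord i == n then 1 else 0).
  rewrite (bigD1 (Ordinal hn')) //= eqxx scale1r big1 ?addr0.
    rewrite (nth_map (existT _ r x0)); last by apply/ltP.
    have -> : nth (existT _ r x0) l n = List.nth n l (existT _ r x0).
      by elim: l n {hi hn hnth hn'} => [|e l IH] [|n] //=.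
    rewrite hnth /f /=.
    by case: excluded_middle_informative => h' //; rewrite (pmap_irr h' h).
  by move=> i; rewrite -val_eqE /= => /negbTE ->; apply: scale0r.
- exists (fun i => c1 i + c2 i); rewrite -big_split /=.
  by apply: eq_bigr => i _; rewrite scalerDl.
- exists (fun i => a * c i); rewrite scaler_sumr.
  by apply: eq_bigr => i _; rewrite scalerA.
Qed.

Lemma compact_finite_type : compact X -> finite_type X.
Proof.
move=> cX t.
have fC : filtered fg_cat.
  apply: poset_cat_filtered; first exact: (inhabits nil).
  move=> i j; exists (i ++ j).
  by split; [apply: List.incl_appl|apply: List.incl_appr]; apply: List.incl_refl.
have [l [g hg]] := compact_factor cX fC fg_colimit (pmor_id X).
have [s hs] := span_generated_findim l t.
exists s => v; apply: hs.
have <- : sval (g t v) = v := hg t v.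
exact: svalP.
Qed.

End FiniteType.

(** * Filtered colimits of persistence modules *)

Section FilteredColimit.
Variables (C : cat) (D : diagram C).
Hypothesis fC : filtered C.

Local Notation dm u t := (dmap D u t).

Definition stage_eq t (i : ob C) (x : dob D i t) (j : ob C) (y : dob D j t) :=
  exists k (u : hom i k) (v : hom j k), dm u t x = dm v t y.

Lemma stage_eq_refl t i x : @stage_eq t i x i x.
Proof. by exists i, (cid i), (cid i). Qed.

Lemma stage_eq_sym t i x j y : @stage_eq t i x j y -> @stage_eq t j y i x.
Proof. by case=> k [u [v E]]; exists k, v, u. Qed.

Lemma stage_eq_trans t i x j y l z :
  @stage_eq t i x j y -> @stage_eq t j y l z -> @stage_eq t i x l z.
Proof.
case=> k [u [v E]] [k' [v' [w' E']]].
have [k'' [a [b Eab]]] := filtered_square fC v v'.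
exists k'', (ccomp a u), (ccomp b w').
by rewrite !dmap_comp E -dmap_comp Eab dmap_comp E' -dmap_comp.
Qed.

Lemma stage_eq_map t i x k (u : hom i k) : @stage_eq t i x k (dm u t x).
Proof. by exists k, u, (cid k); rewrite dmap_id. Qed.

Lemma stage_eq_cospan t i x j y : @stage_eq t i x j y -> forall k (u : hom i k) (v : hom j k),
  exists k' (w : hom k k'), dm w t (dm u t x) = dm w t (dm v t y).
Proof.
case=> k0 [u0 [v0 E]] k u v.
have [k1 [a [b _]]] := filtered_bound fC k k0.
have [k2 [c Ec]] := filtered_coeq fC (ccomp a u) (ccomp b u0).
have [k3 [d Ed]] := filtered_coeq fC (ccomp c (ccomp a v)) (ccomp c (ccomp b v0)).
exists k3, (ccomp d (ccomp c a)).
have E1 : dm (ccomp d (ccomp c a)) t (dm u t x) = dm d t (dm c t (dm b t (dm u0 t x))).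
  by rewrite -!dmap_comp -!ccomp_assoc Ec.
have E2 : dm (ccomp d (ccomp c a)) t (dm v t y) = dm d t (dm c t (dm b t (dm v0 t y))).
  by rewrite -!dmap_comp -!ccomp_assoc Ed.
by rewrite E1 E2 E.
Qed.

Lemma stage_eq_add t i x i' x' j y j' y' : @stage_eq t i x i' x' -> @stage_eq t j y j' y' ->
  forall k (u : hom i k) (v : hom j k) k' (u' : hom i' k') (v' : hom j' k'),
  @stage_eq t k (dm u t x + dm v t y) k' (dm u' t x' + dm v' t y').
Proof.
move=> hx hy k u v k' u' v'.
have [m [a [b _]]] := filtered_bound fC k k'.
have [m1 [w1 E1]] := stage_eq_cospan hx (ccomp a u) (ccomp b u').
have [m2 [w2 E2]] := stage_eq_cospan hy (ccomp w1 (ccomp a v)) (ccomp w1 (ccomp b v')).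
exists m2, (ccomp w2 (ccomp w1 a)), (ccomp w2 (ccomp w1 b)).
by rewrite !dmap_comp in E1 E2; rewrite !pmorD !dmap_comp E1 E2.
Qed.

Lemma stage_eq_scale t i x j y c : @stage_eq t i x j y -> @stage_eq t i (c *: x) j (c *: y).
Proof. by case=> k [u [v E]]; exists k, u, v; rewrite !pmorZ E. Qed.

Lemma stage_eq0 t i j : @stage_eq t i 0 j 0.
Proof. by have [k [u [v _]]] := filtered_bound fC i j; exists k, u, v; rewrite !pmor0. Qed.

Lemma stage_eq_pmap s t (h : nnle s t) i x j y :
  @stage_eq s i x j y -> @stage_eq t i (pmap h x) j (pmap h y).
Proof. by case=> k [u [v E]]; exists k, u, v; rewrite !mcomp_nat E. Qed.

(* The colimit is built explicitly: a germ at t is the [stage_eq]-class of an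
   element of some [D i t], represented by its characteristic predicate. *)
Definition germ_class t i (x : dob D i t) : forall k, dob D k t -> Prop :=
  fun k z => @stage_eq t i x k z.

Definition germ t := {F : forall k, dob D k t -> Prop | exists i x, F = @germ_class t i x}.

Definition germ_of t i (x : dob D i t) : germ t :=
  exist _ (germ_class x) (ex_intro _ i (ex_intro _ x erefl)).

Lemma germ_of_eq t i x j y : @stage_eq t i x j y -> @germ_of t i x = @germ_of t j y.
Proof.
move=> E; apply: sval_inj => /=.
apply: functional_extensionality_dep => k; apply: functional_extensionality_dep => z.
by apply: propext; split => H; [apply: stage_eq_trans (stage_eq_sym E) H|apply: stage_eq_trans E H].
Qed.

Lemma germ_of_inj t i x j y : @germ_of t i x = @germ_of t j y -> @stage_eq t i x j y.
Proof.
move=> E; have := f_equal (fun F => sval F j y) E; rewrite /= /germ_class => ->.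
exact: stage_eq_refl.
Qed.

Lemma germ_of_surj t (F : germ t) : exists p : {i : ob C & dob D i t}, F = germ_of (projT2 p).
Proof. by case: F => F [i [x E]]; exists (existT _ i x); apply: sval_inj. Qed.

Definition germ_rep t (F : germ t) : {i : ob C & dob D i t} :=
  sval (constructive_indefinite_description _ (germ_of_surj F)).

Lemma germ_repK t (F : germ t) : F = germ_of (projT2 (germ_rep F)).
Proof. exact: svalP (constructive_indefinite_description _ (germ_of_surj F)). Qed.

Lemma stage_eq_rep t i x : @stage_eq t i x _ (projT2 (germ_rep (germ_of x))).
Proof. by apply: germ_of_inj; apply: germ_repK. Qed.

Definition pick_cospan (i j : ob C) : {k : ob C & (hom i k * hom j k)%type}.
Proof.
have H : exists p : {k : ob C & (hom i k * hom j k)%type}, True.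
  by have [k [u [v _]]] := filtered_bound fC i j; exists (existT _ k (u, v)).
exact: sval (constructive_indefinite_description _ H).
Defined.

Definition some_ob : ob C := epsilon (proj1 fC) (fun _ => True).

Definition germ_add t (F G : germ t) : germ t :=
  let p := germ_rep F in let q := germ_rep G in let c := pick_cospan (projT1 p) (projT1 q) in
  germ_of (dm (projT2 c).1 t (projT2 p) + dm (projT2 c).2 t (projT2 q)).
Definition germ_scale t (a : rat) (F : germ t) : germ t := germ_of (a *: projT2 (germ_rep F)).
Definition germ_zero t : germ t := @germ_of t some_ob 0.
Definition germ_opp t (F : germ t) : germ t := germ_scale (-1) F.

Lemma germ_addE t i x j y k (u : hom i k) (v : hom j k) :
  germ_add (@germ_of t i x) (@germ_of t j y) = germ_of (dm u t x + dm v t y).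
Proof. by apply: germ_of_eq; apply: stage_eq_add; apply: stage_eq_sym; apply: stage_eq_rep. Qed.

Lemma germ_add_same t k (a b : dob D k t) : germ_add (germ_of a) (germ_of b) = germ_of (a + b).
Proof. by rewrite (germ_addE _ _ (cid k) (cid k)) !dmap_id. Qed.

Lemma germ_scaleE t i x c : germ_scale c (@germ_of t i x) = germ_of (c *: x).
Proof. by apply: germ_of_eq; apply: stage_eq_scale; apply: stage_eq_sym; apply: stage_eq_rep. Qed.

Lemma germ_zeroE t i : germ_zero t = @germ_of t i 0.
Proof. by apply: germ_of_eq; apply: stage_eq0. Qed.

Lemma germ_of_map t i x k (u : hom i k) : @germ_of t i x = germ_of (dm u t x).
Proof. by apply: germ_of_eq; apply: stage_eq_map. Qed.

Lemma germ_common2 t (F G : germ t) : exists k (a b : dob D k t), F = germ_of a /\ G = germ_of b.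
Proof.
rewrite (germ_repK F) (germ_repK G).
case: (germ_rep F) => i x; case: (germ_rep G) => j y /=.
have [k [u [v _]]] := filtered_bound fC i j.
by exists k, (dm u t x), (dm v t y); rewrite -!germ_of_map.
Qed.

Lemma germ_common3 t (F G H : germ t) :
  exists k (a b c : dob D k t), [/\ F = germ_of a, G = germ_of b & H = germ_of c].
Proof.
have [k [a [b [-> ->]]]] := germ_common2 F G.
rewrite (germ_repK H); case: (germ_rep H) => j y /=.
have [m [u [v _]]] := filtered_bound fC k j.
by exists m, (dm u t a), (dm u t b), (dm v t y); rewrite -!germ_of_map.
Qed.

Lemma germ_ind t (P : germ t -> Prop) : (forall i x, P (@germ_of t i x)) -> forall F, P F.
Proof. by move=> HP F; rewrite (germ_repK F); apply: HP. Qed.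

Definition germ_ops t : lmodOps (germ t).
Proof.
refine (@LmodOps (germ t) (germ_zero t) (@germ_add t) (@germ_opp t) (@germ_scale t)
  _ _ _ _ _ _ _ _).
- move=> F G H; have [k [a [b [c [-> -> ->]]]]] := germ_common3 F G H.
  by rewrite !germ_add_same addrA.
- move=> F G; have [k [a [b [-> ->]]]] := germ_common2 F G.
  by rewrite !germ_add_same addrC.
- by apply: germ_ind => i x; rewrite (germ_zeroE t i) germ_add_same add0r.
- apply: germ_ind => i x.
  by rewrite /germ_opp germ_scaleE germ_add_same scaleN1r addNr -germ_zeroE.
- by move=> a b; apply: germ_ind => i x; rewrite !germ_scaleE scalerA.
- by apply: germ_ind => i x; rewrite !germ_scaleE scale1r.
- move=> a F G; have [k [x [y [-> ->]]]] := germ_common2 F G.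
  by rewrite [in LHS]germ_add_same !germ_scaleE germ_add_same scalerDr.
- by apply: germ_ind => i x a b; rewrite !germ_scaleE germ_add_same scalerDl.
Defined.

Definition germ_lmod t : lmodType rat := lmod_of (germ_ops t).

Lemma germ_lmod_add t (F G : germ_lmod t) : F + G = germ_add F G.
Proof. by []. Qed.

Lemma germ_lmod_scale t a (F : germ_lmod t) : a *: F = germ_scale a F.
Proof. by []. Qed.

Definition germ_pmap s t (h : nnle s t) (F : germ_lmod s) : germ_lmod t :=
  germ_of (pmap h (projT2 (germ_rep F))).

Lemma germ_pmapE s t (h : nnle s t) i x : germ_pmap h (@germ_of s i x) = germ_of (pmap h x).
Proof. by apply: germ_of_eq; apply: stage_eq_pmap; apply: stage_eq_sym; apply: stage_eq_rep. Qed.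

Definition germ_colim : pmod.
Proof.
refine (@PMod germ_lmod germ_pmap _ _ _).
- move=> s t h c F G; rewrite !germ_lmod_add !germ_lmod_scale.
  have [k [x [y [-> ->]]]] := germ_common2 F G.
  by rewrite (@germ_scaleE s k x c) germ_add_same !germ_pmapE germ_scaleE germ_add_same pmap_linear.
- by move=> t h; apply: germ_ind => i x; rewrite germ_pmapE pmap_id.
- by move=> s t u hst htu hsu; apply: germ_ind => i x; rewrite !germ_pmapE (pmap_comp hst htu).
Defined.

Definition germ_in (i : ob C) : pmor (dob D i) germ_colim.
Proof.
refine (@PMor (dob D i) germ_colim (fun t x => @germ_of t i x) _ _).
- by move=> t c x y /=; rewrite germ_lmod_add germ_lmod_scale germ_scaleE germ_add_same.
- by move=> s t h x /=; rewrite germ_pmapE.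
Defined.

Lemma germ_in_cocone : @is_cocone C D germ_colim germ_in.
Proof. by move=> i j u t x /=; rewrite -germ_of_map. Qed.

Section ColimitElements.
Variables (L : pmod) (iota : forall i, pmor (dob D i) L).
Hypothesis cL : @is_colimit C D L iota.

Lemma colimit_stage_eq t i x j y : @stage_eq t i x j y -> iota i t x = iota j t y.
Proof.
by case: cL => hc _ [k [u [v E]]]; rewrite -(hc i k u) -(hc j k v) E.
Qed.

Definition germ_to_colim_fun t (F : germ_lmod t) : L t :=
  iota (projT1 (germ_rep F)) t (projT2 (germ_rep F)).

Lemma germ_to_colimE t i x : germ_to_colim_fun (@germ_of t i x) = iota i t x.
Proof. by symmetry; apply: colimit_stage_eq; apply: stage_eq_rep. Qed.

Definition germ_to_colim : pmor germ_colim L.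
Proof.
refine (@PMor germ_colim L germ_to_colim_fun _ _).
- move=> t c F G; rewrite germ_lmod_add germ_lmod_scale.
  have [k [x [y [-> ->]]]] := germ_common2 F G.
  by rewrite germ_scaleE germ_add_same !germ_to_colimE mcomp_linear.
- by move=> s t h; apply: germ_ind => i x /=; rewrite germ_pmapE !germ_to_colimE mcomp_nat.
Defined.

(* [germ_to_colim] composed with the comparison map L -> germ_colim is id_L by
   uniqueness, so every element of L comes from a germ. *)
Lemma colimit_surj t (y : L t) : exists i x, iota i t x = y.
Proof.
case: cL => hc hu.
have [m [hm _]] := hu germ_colim germ_in germ_in_cocone.
have [m1 [_ hm1]] := hu L iota hc.
have E1 : forall i s x, pcomp germ_to_colim m s (iota i s x) = iota i s x.
  by move=> i s x /=; rewrite hm /=; apply: germ_to_colimE.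
have : germ_to_colim_fun (m t y) = y.
  transitivity (m1 t y); first exact: (hm1 _ E1 t y).
  exact: esym (hm1 (pmor_id L) (fun _ _ _ => erefl) t y).
rewrite (germ_repK (m t y)) germ_to_colimE => E.
by exists (projT1 (germ_rep (m t y))), (projT2 (germ_rep (m t y))).
Qed.

Lemma colimit_eq_stage_eq t i x j y : iota i t x = iota j t y -> @stage_eq t i x j y.
Proof.
case: cL => hc hu; have [m [hm _]] := hu germ_colim germ_in germ_in_cocone.
by move=> E; apply: germ_of_inj; rewrite -[LHS](hm i t x) -[RHS](hm j t y) /= E.
Qed.

End ColimitElements.

End FilteredColimit.

(** * Tame modules of finite type are compact *)

Section LinearAlgebra.
Variable V : lmodType rat.

Definition lincomb (s : list V) (c : nat -> rat) : V := \sum_(i < size s) c i *: s`_i.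

Lemma lincomb_cons x s c : lincomb (x :: s) c = c 0%N *: x + lincomb s (fun n => c n.+1).
Proof. by rewrite /lincomb /= big_ord_recl. Qed.

Lemma lincombD s c d : lincomb s (fun n => c n + d n) = lincomb s c + lincomb s d.
Proof. by rewrite /lincomb -big_split; apply: eq_bigr => i _; rewrite scalerDl. Qed.

Lemma lincombZ s a c : lincomb s (fun n => a * c n) = a *: lincomb s c.
Proof. by rewrite /lincomb scaler_sumr; apply: eq_bigr => i _; rewrite scalerA. Qed.

Lemma lincombN s c : lincomb s (fun n => - c n) = - lincomb s c.
Proof. by rewrite -scaleN1r -lincombZ /lincomb; apply: eq_bigr => i _; rewrite mulN1r. Qed.

Lemma lin_lincomb (W : lmodType rat) (f : V -> W) s c : linear f ->
  f (lincomb s c) = \sum_(i < size s) c i *: f s`_i.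
Proof. by move=> hf; rewrite /lincomb lin_sum //; apply: eq_bigr => i _; rewrite lin_scale. Qed.

Definition lin_free (s : list V) :=
  forall c, lincomb s c = 0 -> forall n, (n < size s)%nat -> c n = 0.

Definition lin_spans (s : list V) := forall v, exists c, v = lincomb s c.

Lemma free_subfamily (s : list V) :
  exists b, lin_free b /\ forall c, exists d, lincomb s c = lincomb b d.
Proof.
elim: s => [|x s [b [fb sb]]]; first by exists [::]; split=> [c _ n //|c]; exists c.
case: (classic (exists d, x = lincomb b d)) => [[d hd]|hx].
  exists b; split => // c; have [d' hd'] := sb (fun n => c n.+1).
  exists (fun n => c 0%N * d n + d' n).
  by rewrite lincomb_cons lincombD lincombZ -hd -hd'.
exists (x :: b); split=> [c|c]; last first.
  have [d hd] := sb (fun n => c n.+1).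
  by exists (fun n => if n is n'.+1 then d n' else c 0%N); rewrite !lincomb_cons hd.
rewrite lincomb_cons => hc.
have c0 : c 0%N = 0.
  apply: contrapT => /eqP hne; apply: hx; exists (fun n => - (c 0%N)^-1 * c n.+1).
  rewrite lincombZ; apply: (@scalerI _ _ (c 0%N)) => //.
  rewrite scalerA mulrN mulfV // scaleN1r.
  by apply/eqP; rewrite -addr_eq0; apply/eqP.
rewrite c0 scale0r add0r in hc.
by case=> [|n] //= hn; apply: (fb _ hc).
Qed.

Lemma exists_basis (s : list V) : lin_spans s -> exists b, lin_free b /\ lin_spans b.
Proof.
move=> hs; have [b [fb sb]] := free_subfamily s; exists b; split => // v.
by have [c ->] := hs v; apply: sb.
Qed.

Lemma lincomb_inj b c d : lin_free b -> lincomb b c = lincomb b d ->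
  forall n, (n < size b)%nat -> c n = d n.
Proof.
move=> fb E n hn; apply/eqP; rewrite -subr_eq0; apply/eqP.
apply: (fb (fun n => c n - d n)) => //.
by rewrite (lincombD b c (fun n => - d n)) lincombN E subrr.
Qed.

Section Basis.
Variable b : list V.
Hypotheses (b_free : lin_free b) (b_spans : lin_spans b).

Definition coords (v : V) : nat -> rat :=
  epsilon (inhabits (fun _ => 0)) (fun c => v = lincomb b c).

Lemma coordsK v : v = lincomb b (coords v).
Proof. exact: (epsilon_spec _ (fun c => v = lincomb b c) (b_spans v)). Qed.

Lemma coords_lin a v w : forall n, (n < size b)%nat ->
  coords (a *: v + w) n = a * coords v n + coords w n.
Proof. by apply: lincomb_inj => //; rewrite -coordsK lincombD lincombZ -!coordsK. Qed.

Definition basis_ext (W : lmodType rat) (ys : nat -> W) (v : V) : W :=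
  \sum_(i < size b) coords v i *: ys i.

Lemma basis_ext_linear (W : lmodType rat) (ys : nat -> W) : linear (basis_ext ys).
Proof.
move=> a v w; rewrite /basis_ext scaler_sumr -big_split; apply: eq_bigr => i _.
by rewrite coords_lin // scalerDl scalerA.
Qed.

Lemma linear_eq_on_basis (W : lmodType rat) (f1 f2 : V -> W) : linear f1 -> linear f2 ->
  (forall n, (n < size b)%nat -> f1 b`_n = f2 b`_n) -> forall v, f1 v = f2 v.
Proof.
move=> h1 h2 H v; rewrite (coordsK v) !lin_lincomb //.
by apply: eq_bigr => i _; rewrite H.
Qed.

Lemma basis_ext_comp (W W' : lmodType rat) (ys : nat -> W) (k : W -> W') (f : V -> W') :
  linear k -> linear f -> (forall n, (n < size b)%nat -> k (ys n) = f b`_n) ->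
  forall v, k (basis_ext ys v) = f v.
Proof.
move=> hk hf H v; rewrite /basis_ext lin_sum // [in RHS](coordsK v) lin_lincomb //.
by apply: eq_bigr => i _; rewrite lin_scale // H.
Qed.

End Basis.
End LinearAlgebra.

Lemma findim_basis (V : lmodType rat) : findim V -> exists b : list V, lin_free b /\ lin_spans b.
Proof.
case=> s hs; apply: (@exists_basis _ s) => v; have [c ->] := hs v.
exists (fun n => if @insub nat (fun n => (n < size s)%nat) _ n is Some i then c i else 0).
by rewrite /lincomb; apply: eq_bigr => i _; rewrite valK.
Qed.

Lemma exists_max_below (l : list nnR) (t : nnR) : (exists q, List.In q l /\ nnle q t) ->
  exists p, [/\ List.In p l, nnle p t & forall q, List.In q l -> nnle q t -> nnle q p].
Proof.
elim: l => [[q [[]]]|a l IH] H.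
case: (classic (exists q, List.In q l /\ nnle q t)) => [Hl|Hl]; last first.
  exists a; case: H => q [[<-|hq] hqt]; last by case: Hl; exists q.
  split=> [||q' [<-|hq'] hq't]; [by left|by []|exact: nnle_refl|by case: Hl; exists q'].
have [p [hp hpt hmax]] := IH Hl.
case: (Rle_dec (sval a) (sval p)) => hap.
  by exists p; split=> [||q [<-|hq] hqt]; [right|..|apply: hmax].
case: (Rle_dec (sval a) (sval t)) => hat.
  exists a; split=> [||q [<-|hq] hqt]; [by left|by []|exact: nnle_refl|].
  by have := hmax q hq hqt; rewrite /nnle; lra.
by exists p; split=> [||q [<-|hq] hqt]; [right|..|apply: hmax].
Qed.

(* A tame module is determined by its values at finitely many sample points:
   X(t) is identified with X(p) for the largest sample point p <= t. *)
Section Samples.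
Variables (X : pmod) (samples : list nnR).
Hypothesis sample0 : exists p0, List.In p0 samples /\ sval p0 = 0%R.
Hypothesis samples_disc : forall (s t : nnR) (h : nnle s t), ~ bijective (@pmap X _ _ h) ->
  exists p, [/\ List.In p samples, (sval s < sval p)%R & nnle p t].

Lemma sample_below_ex (t : nnR) : exists p, List.In p samples /\ exists hpt : nnle p t,
  (forall q, List.In q samples -> nnle q t -> nnle q p) /\ bijective (@pmap X _ _ hpt).
Proof.
have [p [hp hpt hmax]] : exists p, [/\ List.In p samples, nnle p t &
    forall q, List.In q samples -> nnle q t -> nnle q p].
  apply: exists_max_below; have [p0 [hp0 e0]] := sample0; exists p0; split => //.
  by rewrite /nnle e0; apply: (svalP t).
exists p; split => //; exists hpt; split => //.
apply: NNPP => nbij; have [q [hq h1 h2]] := samples_disc nbij.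
by have := hmax q hq h2; rewrite /nnle; lra.
Qed.

Definition sample_below (t : nnR) : nnR :=
  sval (constructive_indefinite_description _ (sample_below_ex t)).

Let sample_below_spec t := svalP (constructive_indefinite_description _ (sample_below_ex t)).

Lemma sample_below_in t : List.In (sample_below t) samples.
Proof. by case: (sample_below_spec t). Qed.

Lemma sample_below_le t : nnle (sample_below t) t.
Proof. by case: (sample_below_spec t) => _ [h _]. Qed.

Lemma sample_below_max t q : List.In q samples -> nnle q t -> nnle q (sample_below t).
Proof. by case: (sample_below_spec t) => _ [h [H _]]; apply: H. Qed.

Lemma sample_below_bij t : bijective (@pmap X _ _ (sample_below_le t)).
Proof. by case: (sample_below_spec t) => _ [h [_ H]]; apply: pmap_bij_irr H. Qed.

Definition sample_pre t (v : X t) : X (sample_below t) :=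
  epsilon (inhabits 0) (fun z => pmap (sample_below_le t) z = v).

Lemma sample_preK t v : pmap (sample_below_le t) (sample_pre v) = v.
Proof.
apply: (epsilon_spec _ (fun z => pmap (sample_below_le t) z = v)).
by case: (sample_below_bij t) => g _ hg; exists (g v).
Qed.

Lemma pmor_samples_determined (M : pmod) (g g' : pmor X M) :
  (forall p, List.In p samples -> forall z, g p z = g' p z) -> forall t v, g t v = g' t v.
Proof.
move=> H t v; rewrite -(sample_preK v) !mcomp_nat.
by rewrite H //; apply: sample_below_in.
Qed.

Lemma extend_from_samples (M : pmod) (G : forall p, X p -> M p) :
  (forall p, List.In p samples -> linear (G p)) ->
  (forall p q (h : nnle p q), List.In p samples -> List.In q samples ->
     forall z, G q (pmap h z) = pmap h (G p z)) ->
  exists g : pmor X M, forall p, List.In p samples -> forall z, g p z = G p z.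
Proof.
move=> G_lin G_nat.
pose g t (v : X t) := pmap (sample_below_le t) (G _ (sample_pre v)).
have gE t q (hq : List.In q samples) (hqt : nnle q t) z : g t (pmap hqt z) = pmap hqt (G q z).
  have hqp := sample_below_max hq hqt.
  have E : sample_pre (pmap hqt z) = pmap hqp z.
    apply: (bij_inj (sample_below_bij t)).
    by rewrite sample_preK pmap_pmap; apply: pmap_irr.
  by rewrite /g E (G_nat _ _ _ hq (sample_below_in t)) pmap_pmap; apply: pmap_irr.
have g_lin t : linear (g t).
  move=> a v w; rewrite -[v]sample_preK -[w]sample_preK -pmap_linear.
  by rewrite !(gE t _ (sample_below_in t)) G_lin ?pmap_linear //; apply: sample_below_in.
have g_nat s t (h : nnle s t) v : g t (pmap h v) = pmap h (g s v).
  rewrite -[v]sample_preK pmap_pmap !(gE _ _ (sample_below_in s)) pmap_pmap.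
  exact: pmap_irr.
exists (PMor g_lin g_nat) => p hp z /=.
by rewrite -[z in LHS](pmap_id (nnle_refl p)) (gE _ _ hp) pmap_id.
Qed.

End Samples.

Lemma tame_samples (X : pmod) : tame X -> exists samples : list nnR,
  (exists p0, List.In p0 samples /\ sval p0 = 0%R) /\
  forall (s t : nnR) (h : nnle s t), ~ bijective (@pmap X _ _ h) ->
    exists p, [/\ List.In p samples, (sval s < sval p)%R & nnle p t].
Proof.
case=> ts [_ [ts_nneg [_ disc]]].
have [Ps [hP0 hPts]] : exists Ps : list nnR, (exists p0, List.In p0 Ps /\ sval p0 = 0%R) /\
    forall x, List.In x ts -> exists p, List.In p Ps /\ sval p = x.
  elim: ts ts_nneg {disc} => [|x l IH] ts_nneg.
    by exists (mknn (Rle_refl 0) :: nil); split=> //; exists (mknn (Rle_refl 0)); split=> //; left.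
  have [Ps [[p0 [hp0 e0]] hP]] := IH (List.Forall_inv_tail ts_nneg).
  exists (mknn (List.Forall_inv ts_nneg) :: Ps); split; first by exists p0; split => //; right.
  move=> y [<-|hy]; first by exists (mknn (List.Forall_inv ts_nneg)); split => //; left.
  by have [p [hp ep]] := hP y hy; exists p; split => //; right.
exists Ps; split => // s t h nbij.
have [ti [hti [h2 h3]]] := disc s t h nbij.
by have [p [hp ep]] := hPts ti hti; exists p; rewrite /nnle ep.
Qed.

Lemma in_seq0 n m : (n < m)%nat -> List.In n (List.seq 0 m).
Proof. by move=> hn; apply/List.in_seq; split; [apply: Nat.le_0_l|apply/ltP]. Qed.

Section Converse.
Variables (C : cat) (D : diagram C).
Hypothesis fC : filtered C.
Variables (L : pmod) (iota : forall i, pmor (dob D i) L).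
Hypothesis cL : @is_colimit C D L iota.

Local Notation dm u t := (dmap D u t).

Lemma colimit_cocone i j (u : hom i j) t x : iota j t (dm u t x) = iota i t x.
Proof. by case: cL => hc _; apply: hc. Qed.

Lemma colimit_eq_later (i : ob C) t (x y : dob D i t) : iota i t x = iota i t y ->
  exists k (u : hom i k), dm u t x = dm u t y.
Proof.
move=> E; have [k [u [v Euv]]] := colimit_eq_stage_eq fC cL E.
have [m [w Ew]] := filtered_coeq fC u v.
by exists m, (ccomp w u); rewrite dmap_comp Euv -dmap_comp -Ew.
Qed.

Section FiniteDimensionalSource.
Variables (V : lmodType rat) (b : list V).
Hypotheses (b_free : lin_free b) (b_spans : lin_spans b).

Lemma colimit_lift_lin t (f : V -> L t) : linear f ->
  exists i (g : V -> dob D i t), linear g /\ forall v, iota i t (g v) = f v.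
Proof.
move=> f_lin.
have [i Hi] : exists i, forall n, List.In n (List.seq 0 (size b)) ->
    exists y : dob D i t, iota i t y = f b`_n.
  apply: filtered_bound_list => // [n i j u [y hy]|n _].
    by exists (dm u t y); rewrite colimit_cocone.
  by have [i [x hx]] := colimit_surj fC cL (f b`_n); exists i, x.
pose ys n : dob D i t := epsilon (inhabits 0) (fun y => iota i t y = f b`_n).
exists i, (basis_ext b ys); split; first exact: basis_ext_linear.
apply: (basis_ext_comp b_spans) => // [|n hn]; first exact: mcomp_linear.
exact: (epsilon_spec _ (fun y => iota i t y = f b`_n) (Hi n (in_seq0 hn))).
Qed.

Lemma colimit_equalize_lin i t (g g' : V -> dob D i t) : linear g -> linear g' ->
  (forall v, iota i t (g v) = iota i t (g' v)) ->
  exists k (u : hom i k), forall v, dm u t (g v) = dm u t (g' v).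
Proof.
move=> g_lin g'_lin E.
have [k [u Hu]] : exists k (u : hom i k), forall n, List.In n (List.seq 0 (size b)) ->
    dm u t (g b`_n) = dm u t (g' b`_n).
  apply: filtered_bound_list_under => // [n k k' u w H|n _]; first by rewrite !dmap_comp H.
  exact: colimit_eq_later (E b`_n).
exists k, u; apply: (linear_eq_on_basis b_spans) => [||n hn]; last exact: Hu (in_seq0 hn).
  by apply: linear_comp_aux => //; apply: mcomp_linear.
by apply: linear_comp_aux => //; apply: mcomp_linear.
Qed.

End FiniteDimensionalSource.
Section TameFiniteType.
Variables (X : pmod) (samples : list nnR).
Hypothesis sample0 : exists p0, List.In p0 samples /\ sval p0 = 0%R.
Hypothesis samples_disc : forall (s t : nnR) (h : nnle s t), ~ bijective (@pmap X _ _ h) ->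
  exists p, [/\ List.In p samples, (sval s < sval p)%R & nnle p t].
Hypothesis fX : finite_type X.

Lemma tame_equalize i (g g' : pmor X (dob D i)) :
  (forall t x, iota i t (g t x) = iota i t (g' t x)) ->
  exists k (u : hom i k), forall t x, dm u t (g t x) = dm u t (g' t x).
Proof.
move=> E.
have [k [u Hu]] : exists k (u : hom i k), forall p, List.In p samples ->
    forall z, dm u p (g p z) = dm u p (g' p z).
  apply: filtered_bound_list_under => // [p k k' u w H z|p _]; first by rewrite !dmap_comp H.
  have [b [_ b_spans]] := findim_basis (fX p).
  exact (colimit_equalize_lin b_spans (@mcomp_linear _ _ g p) (@mcomp_linear _ _ g' p) (E p)).
exists k, u; exact: (pmor_samples_determined sample0 samples_disc
  (g := pcomp (dmap D u) g) (g' := pcomp (dmap D u) g')).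
Qed.

Section Lift.
Variable f : pmor X L.

Definition lifts_at k p (G : X p -> dob D k p) := linear G /\ forall v, iota k p (G v) = f p v.

Lemma lift_on_samples : exists i (G : forall p, X p -> dob D i p),
  forall p, List.In p samples -> lifts_at (G p).
Proof.
have [i Hi] : exists i, forall p, List.In p samples -> exists G, @lifts_at i p G.
  apply: filtered_bound_list => // [p i j u [G [G_lin HG]]|p _].
    exists (fun v => dm u p (G v)); split=> [|v]; last by rewrite colimit_cocone.
    by apply: linear_comp_aux => //; apply: mcomp_linear.
  have [b [b_free b_spans]] := findim_basis (fX p).
  have [i [G HG]] := colimit_lift_lin b_free b_spans (@mcomp_linear _ _ f p).
  by exists i, G.
exists i, (fun p => epsilon (inhabits (fun _ => 0)) (@lifts_at i p)) => p hp.
exact: epsilon_spec (Hi p hp).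
Qed.

Lemma compatible_lift_on_samples : exists k (G : forall p, X p -> dob D k p),
  (forall p, List.In p samples -> lifts_at (G p)) /\
  forall p q (h : nnle p q), List.In p samples -> List.In q samples ->
    forall z, G q (pmap h z) = pmap h (G p z).
Proof.
have [i [G0 HG0]] := lift_on_samples.
have [k [u Hu]] : exists k (u : hom i k), forall pq, List.In pq (List.list_prod samples samples) ->
    forall (h : nnle pq.1 pq.2) z, dm u _ (G0 pq.2 (pmap h z)) = dm u _ (pmap h (G0 pq.1 z)).
  apply: filtered_bound_list_under => // [[p q] k k' u w H h z|[p q] /List.in_prod_iff [hp hq]].
    by rewrite !dmap_comp H.
  case: (classic (nnle p q)) => [h0|npq]; last by exists i, (cid i) => h; case: npq.
  have [[G0p_lin G0p] [G0q_lin G0q]] := (HG0 p hp, HG0 q hq).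
  have [b [_ b_spans]] := findim_basis (fX p).
  have E z : iota i q (G0 q (pmap h0 z)) = iota i q (pmap h0 (G0 p z)).
    by rewrite G0q mcomp_nat -G0p -mcomp_nat.
  have [k [u Hu]] := colimit_equalize_lin b_spans
    (linear_comp_aux G0q_lin (pmap_linear h0)) (linear_comp_aux (pmap_linear h0) G0p_lin) E.
  by exists k, u => h z /=; rewrite !(pmap_irr h h0) Hu.
exists k, (fun p z => dm u p (G0 p z)); split=> [p hp|p q h hp hq z].
  have [G0_lin HG] := HG0 p hp; split=> [|v]; last by rewrite colimit_cocone.
  by apply: linear_comp_aux => //; apply: mcomp_linear.
by rewrite (Hu (p, q)) ?mcomp_nat //; apply/List.in_prod_iff.
Qed.

Lemma tame_lift : exists i (g : pmor X (dob D i)), forall t x, iota i t (g t x) = f t x.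
Proof.
have [k [G [HG G_nat]]] := compatible_lift_on_samples.
have [g Hg] := extend_from_samples sample0 samples_disc (fun p hp => (HG p hp).1) G_nat.
exists k, g; apply: (pmor_samples_determined sample0 samples_disc (g := pcomp (iota k) g)).
by move=> p hp z /=; rewrite Hg // (HG p hp).2.
Qed.

End Lift.

(* The induced map sends f to [c i g] for any lift g of f to a stage i; it is
   well defined by [tame_equalize]. *)
Lemma tame_hom_cocone_colimit : hom_cocone_is_colimit X iota.
Proof.
split=> [i j u g|Z c c_cocone]; first by apply: pmor_ext => t x /=; apply: colimit_cocone.
have c_eq i (g : pmor X (dob D i)) j (g' : pmor X (dob D j)) :
    (forall t x, iota i t (g t x) = iota j t (g' t x)) -> c i g = c j g'.
  move=> E; have [k [a [b _]]] := filtered_bound fC i j.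
  have E' t x : iota k t (pcomp (dmap D a) g t x) = iota k t (pcomp (dmap D b) g' t x).
    by rewrite /= !colimit_cocone E.
  have [m [u Hu]] := tame_equalize E'.
  rewrite -(c_cocone i k a g) -(c_cocone j k b g') -(c_cocone k m u) -(c_cocone k m u (pcomp _ g')).
  by congr (c m _); apply: pmor_ext => t x /=; apply: Hu.
have lift (f : pmor X L) : exists p : {i : ob C & pmor X (dob D i)},
    forall t x, iota (projT1 p) t (projT2 p t x) = f t x.
  by have [i [g Hg]] := tame_lift f; exists (existT _ i g).
pose fac (f : pmor X L) := sval (constructive_indefinite_description _ (lift f)).
have facE (f : pmor X L) t x : iota (projT1 (fac f)) t (projT2 (fac f) t x) = f t x.
  exact: svalP (constructive_indefinite_description _ (lift f)) t x.
exists (fun f => c (projT1 (fac f)) (projT2 (fac f))); split=> [i g|h' Hh' f].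
  by apply: c_eq => t x; rewrite facE.
have E : f = pcomp (iota (projT1 (fac f))) (projT2 (fac f)).
  by apply: pmor_ext => t x /=; rewrite facE.
by rewrite {1}E Hh'.
Qed.

End TameFiniteType.
End Converse.

Theorem mainTheorem13 (X : pmod) : compact X <-> (tame X /\ finite_type X).
Proof.
split=> [cX|[tX fX] C D fC L iota cL].
  by split; [apply: compact_tame|apply: compact_finite_type].
have [samples [sample0 samples_disc]] := tame_samples tX.
exact: (tame_hom_cocone_colimit fC cL sample0 samples_disc fX).
Qed.
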